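(* Let $x=(x_n)$ and $y=(y_n)$ be sequences of real numbers such that $\sum_n x_n$ and $\sum_n y_n$ are absolutely convergent. If every point of $E(x)$ has a unique representation, or every point of $E(y)$ has a unique representation, then $E(x,y)$ is a Cantor set.
   Context: For an absolutely convergent series $\sum_n v_n$ in $\mathbb R^d$, its achievement set is $E(v)=\{\sum_{n=1}^\infty \varepsilon_n v_n : (\varepsilon_n)\in\{0,1\}^{\mathbb N}\}$; $E(x,y)$ denotes the achievement set of the sequence $((x_n,y_n))_n$ in $\mathbb R^2$. A point $a$ of $E(v)$ has a unique representation if there is exactly one set $A\subset\mathbb N$ with $a=\sum_{i\in A}v_i$. A Cantor set is a nonempty, totally disconnected, perfect, compact subset of $\mathbb R^n$. *)

From HB Require Import structures.
From mathcomp Require Import all_boot all_order all_algebra.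
From mathcomp Require Import all_classical all_reals all_analysis.
Set Implicit Arguments. Unset Strict Implicit. Unset Printing Implicit Defensive.
Import Order.TTheory GRing.Theory Num.Theory.
Import numFieldNormedType.Exports.
Local Open Scope classical_set_scope.
Local Open Scope ring_scope.

Definition abs_convergent {R : realType} (x : nat -> R) : Prop :=
  cvgn (series (fun n => `|x n|)).

Definition subsum {R : realType} {V : normedModType R} (v : nat -> V)
  (A : set nat) : V :=
  limn (series (fun n => (n \in A)%:R *: v n)).

(* Achievement set E(v) = { sum_n eps_n v_n : eps in {0,1}^N }; a 0-1 sequence
   eps is identified with the set A = {n | eps_n = 1}. *)
Definition achievement_set {R : realType} {V : normedModType R}
  (v : nat -> V) : set V := [set subsum v A | A in [set: set nat]].

Definition unique_representation {R : realType} {V : normedModType R}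
  (v : nat -> V) (a : V) : Prop :=
  exists! A : set nat, a = subsum v A.

Definition cantor_set {T : topologicalType} (C : set T) : Prop :=
  [/\ C !=set0, totally_disconnected C, perfect_set C & compact C].

From HB Require Import structures.
From mathcomp Require Import all_boot all_order all_algebra.
From mathcomp Require Import all_classical all_reals all_analysis.
Set Implicit Arguments. Unset Strict Implicit. Unset Printing Implicit Defensive.
Import Order.TTheory GRing.Theory Num.Theory.
Import numFieldNormedType.Exports.
Local Open Scope classical_set_scope.
Local Open Scope ring_scope.

(* The map b |-> sum_n b_n v_n from the Cantor space {0,1}^N onto E(v) is
   continuous when sum_n v_n converges absolutely, since two bit sequences
   agreeing up to N give sums within the tail sum_{n >= N} |v_n|.  For the
   planar sequence (x_n, y_n) it is the pair of the two coordinate maps, hence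
   injective as soon as one coordinate is.  A continuous injection of the
   compact, perfect, zero-dimensional Cantor space into a Hausdorff space has
   a Cantor set as image. *)

Lemma lim_tail_series (R : realType) (u : R ^nat) N : cvgn (series u) ->
  limn (series (fun n => (N <= n)%N%:R * u n)) = limn (series u) - series u N.
Proof.
move=> u_cvg; apply: cvg_lim; first exact: norm_hausdorff.
apply: cvg_trans (cvgB u_cvg (cvg_cst _)); apply: near_eq_cvg; near=> m.
have Nm : (N <= m)%N by near: m; exists N.
rewrite -[LHS]/(series _ m - series _ N) sub_series_geq // seriesEnat /=.
rewrite (big_cat_nat (leq0n N) Nm) /= [X in _ = X + _]big_nat_cond.
rewrite [X in _ = X + _]big1 ?add0r => [|k /andP[/andP[_ kN] _]]; last first.
  by rewrite leqNgt kN mul0r.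
by apply: eq_big_nat => k /andP[Nk _]; rewrite Nk mul1r.
Unshelve. all: by end_near.
Qed.

Lemma nbhs_prefix (b : cantor_space) N :
  nbhs b [set b' : cantor_space | forall i, (i < N)%N -> b' i = b i].
Proof.
elim: N => [|N IH].
  by apply: filterS filterT => b' _ i.
have bN : nbhs b [set b' : cantor_space | b' N = b N].
  apply: (@proj_continuous nat (fun _ => bool) N b [set b N]).
  by apply: open_nbhs_nbhs; split; [exact: discrete_open|].
apply: filterS (filterI IH bN) => b' [b'b b'N] i.
by rewrite ltnS leq_eqVlt => /orP[/eqP->//|]; exact: b'b.
Qed.

Section BitSum.
Variables (R : realType) (V : normedModType R) (v : nat -> V).

Definition bitsum (b : cantor_space) : V :=
  limn (series (fun n => (b n)%:R *: v n)).

Lemma subsum_bitsum (A : set nat) : subsum v A = bitsum (fun n => n \in A).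
Proof. by []. Qed.

Lemma bitsum_subsum (b : cantor_space) : bitsum b = subsum v [set n | b n].
Proof.
rewrite subsum_bitsum; congr bitsum; apply/funext => n.
by apply/idP/idP => [|/set_mem //]; exact: mem_set.
Qed.

Lemma achievement_set_bitsum : achievement_set v = bitsum @` setT.
Proof.
rewrite eqEsubset; split => _ [A _ <-].
  by exists (fun n => n \in A); rewrite ?subsum_bitsum.
by exists [set n | A n]; rewrite ?bitsum_subsum.
Qed.

Lemma bitsum_inj :
  (forall a, achievement_set v a -> unique_representation v a) ->
  injective bitsum.
Proof.
move=> v_uniq b1 b2 eq12.
have [A [_ uniqA]] := v_uniq _ (ex_intro2 _ _ _ I (esym (bitsum_subsum b1))).
have A1 := uniqA _ (bitsum_subsum b1).
have A2 := uniqA _ (etrans eq12 (bitsum_subsum b2)).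
apply/funext => n; have /= := congr1 (@^~ n) (etrans (esym A1) A2).
by move=> eq_n; apply/idP/idP => ?; [rewrite -eq_n | rewrite eq_n].
Qed.

End BitSum.

Section BitSumContinuous.
Variables (R : realType) (V : completeNormedModType R) (v : nat -> V).
Hypothesis v_abs : cvgn (series (fun n => `|v n|)).

Lemma cvg_bitsum_series (b : cantor_space) :
  cvgn (series (fun n => (b n)%:R *: v n)).
Proof.
apply: normed_cvg; apply: (series_le_cvg _ _ _ v_abs) => n //=.
by rewrite normrZ; case: (b n); rewrite /= ?normr1 ?normr0 ?mul1r ?mul0r.
Qed.

Lemma bitsum_dist_le (b1 b2 : cantor_space) N :
  (forall i, (i < N)%N -> b1 i = b2 i) ->
  `|bitsum v b1 - bitsum v b2| <=
    limn (series (fun n => `|v n|)) - series (fun n => `|v n|) N.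
Proof.
move=> b12; set d := fun n => (b1 n)%:R *: v n - (b2 n)%:R *: v n.
have tail_cvg : cvgn (series (fun n => (N <= n)%N%:R * `|v n|)).
  apply: (series_le_cvg _ _ _ v_abs) => n //=.
  by case: (N <= n)%N; rewrite ?mul1r ?mul0r.
have d_le n : `|d n| <= (N <= n)%N%:R * `|v n|.
  rewrite /d -scalerBl normrZ; case: (leqP N n) => Nn /=.
    by rewrite mul1r ler_piMl //; case: (b1 n); case: (b2 n);
      rewrite /= ?subrr ?subr0 ?sub0r ?normrN ?normr1 ?normr0.
  by rewrite b12 // subrr normr0 mul0r.
have d_abs : cvgn [normed series d].
  by apply: (series_le_cvg _ _ d_le tail_cvg) => n //=; rewrite mulr_ge0.
have -> : bitsum v b1 - bitsum v b2 = limn (series d).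
  have -> : series d = series (fun n => (b1 n)%:R *: v n)
                      - series (fun n => (b2 n)%:R *: v n).
    by apply/funext => m; rewrite !seriesEnat /= /d sumrB.
  by apply/esym; apply: limB; exact: cvg_bitsum_series.
apply: le_trans (lim_series_norm d_abs) _; rewrite -lim_tail_series //.
by apply: lim_series_le => //; exact: normed_cvg.
Qed.

Lemma bitsum_continuous : continuous (bitsum v).
Proof.
move=> b; apply/cvgrPdist_lt => e e_gt0.
have /cvgrPdist_lt/(_ e e_gt0) [N _ tail_lt] := v_abs.
apply: filterS (nbhs_prefix b N) => b' b'b.
have bb' i : (i < N)%N -> b i = b' i by move=> /b'b.
apply: le_lt_trans (bitsum_dist_le bb') _.
exact: le_lt_trans (ler_norm _) (tail_lt N (leqnn N)).
Qed.

End BitSumContinuous.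

Section CantorImage.
Variables (T : topologicalType) (f : cantor_space -> T).
Hypotheses (T_hausdorff : hausdorff_space T) (f_cont : continuous f)
  (f_inj : injective f).

Lemma cantor_image_compact (A : set cantor_space) : closed A -> compact (f @` A).
Proof.
move=> A_closed; apply: continuous_compact; first exact: continuous_subspaceT.
exact: (subclosed_compact A_closed cantor_space_compact).
Qed.

Lemma cantor_image_closed (A : set cantor_space) : closed A -> closed (f @` A).
Proof. by move=> /cantor_image_compact; exact: compact_closed. Qed.

Lemma cantor_image_totally_disconnected : totally_disconnected (f @` setT).
Proof.
move=> _ [b1 _ <-]; rewrite eqEsubset; split; last first.
  by move=> _ ->; apply: connected_component_refl; exists b1.
move=> z [C [Cb1 C_img C_conn] Cz]; have [b2 _ zb2] := C_img z Cz; subst z.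
apply: contrapT => /eqP f12.
have b12 : b1 != b2 by apply: contra_neq f12 => ->.
have [U [[U_open U_closed] Ub1 nUb2]] := cantor_zero_dimensional b12.
have fU_fnU t : (f @` U) t -> ~ (f @` ~` U) t.
  by move=> [a Ua <-] [a' nUa' /f_inj a'a]; move: nUa'; rewrite a'a.
(* The images of the clopen U and of its complement are disjoint closed sets
   covering C, so the connected C lies in the first one. *)
have C_fU : C `&` (f @` U) = C.
  apply: C_conn.
  - by exists (f b1); split => //; exists b1.
  - exists (~` (f @` ~` U)); first exact/closed_openC/cantor_image_closed/open_closedC.
    rewrite eqEsubset; split => t [Ct Ut]; split => //; first exact: fU_fnU.
    have [b _ tb] := C_img t Ct; subst t.
    by case: (pselect (U b)) => Ub; [exists b | exfalso; apply: Ut; exists b].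
  - by exists (f @` U); first exact: cantor_image_closed.
have : (C `&` (f @` U)) (f b2) by rewrite C_fU.
by case=> _ [a Ua /f_inj ab2]; move: Ua; rewrite ab2.
Qed.

Lemma cantor_image_perfect : perfect_set (f @` setT).
Proof.
split; first exact: cantor_image_closed closedT.
rewrite eqEsubset; split.
  by move=> t /subset_limit_point; rewrite -(closure_id _).1 //; exact: cantor_image_closed.
move=> _ [b _ <-] U fbU.
have [_ cantor_lp] := cantor_perfect.
have : limit_point [set: cantor_space] b by rewrite cantor_lp.
move=> /(_ _ (f_cont fbU)) [b' [b'b _ Ub']].
by exists (f b'); split; [apply: contra_neq b'b => /f_inj | exists b' | ].
Qed.

Lemma cantor_set_cantor_image : cantor_set (f @` setT).
Proof.
split; [by exists (f point), point | exact: cantor_image_totally_disconnected |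
        exact: cantor_image_perfect | exact: cantor_image_compact closedT].
Qed.

End CantorImage.

Lemma bitsum_pair (R : realType) (V W : completeNormedModType R)
    (v : nat -> V) (w : nat -> W) :
  cvgn (series (fun n => `|v n|)) -> cvgn (series (fun n => `|w n|)) ->
  bitsum (fun n => (v n, w n)) = fun b => (bitsum v b, bitsum w b).
Proof.
move=> v_abs w_abs; apply/funext => b; rewrite /bitsum.
have -> : series (fun n => (b n)%:R *: (v n, w n)) =
    fun m => (series (fun n => (b n)%:R *: v n) m,
              series (fun n => (b n)%:R *: w n) m).
  apply/funext; elim => [|m IH]; first by rewrite !seriesEnat /= !big_geq.
  by rewrite !seriesSr IH.
apply: cvg_lim; first exact: norm_hausdorff.
by apply: cvg_pair; exact: cvg_bitsum_series.
Qed.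

Theorem corollary2p3 (R : realType) (x y : nat -> R) :
  abs_convergent x -> abs_convergent y ->
  ((forall a, achievement_set x a -> unique_representation x a) \/
   (forall a, achievement_set y a -> unique_representation y a)) ->
  cantor_set (achievement_set (fun n => (x n, y n) : R * R)).
Proof.
move=> x_abs y_abs unique_xy.
rewrite achievement_set_bitsum (bitsum_pair x_abs y_abs).
apply: cantor_set_cantor_image; first exact: norm_hausdorff.
  have x_cont := bitsum_continuous x_abs; have y_cont := bitsum_continuous y_abs.
  by move=> b; apply: cvg_pair (x_cont b) (y_cont b).
by move=> b1 b2 [eqx eqy]; case: unique_xy => /bitsum_inj; apply.
Qed.
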